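(* Let $q$ be a query with sensitivity $\Delta q$, let $k,\theta>0$, and let the random scale $b$ be such that $1/b$ is Gamma distributed with shape $k$ and scale $\theta$ (density $\frac{x^{k-1}e^{-x/\theta}}{\Gamma(k)\theta^k}$ for $x>0$). Then the R$^2$DP Laplace mechanism $\mathcal M_q(d,b)=q(d)+\mathrm{Lap}(b)$ satisfies $\big((k+1)\ln(1+\Delta q\,\theta)\big)$-differential privacy.
   Context: $\mathrm{Lap}(b)$ is the zero-mean Laplace distribution with density $\frac{1}{2b}e^{-|x|/b}$; the R$^2$DP Laplace mechanism draws the random scale $b$ (independently of the data) and then adds $\mathrm{Lap}(b)$ noise to $q(d)$. $\Delta q=\max|q(d)-q(d')|$ over datasets $d,d'$ differing in one individual's data. A mechanism is $\epsilon$-differentially private if $\mathbb P(\mathcal M(d)\in S)\le e^\epsilon\mathbb P(\mathcal M(d')\in S)$ for all such $d,d'$ and measurable $S$. *)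

From mathcomp Require Import all_boot all_order all_algebra.
From mathcomp Require Import all_classical all_reals all_analysis.
Set Implicit Arguments. Unset Strict Implicit. Unset Printing Implicit Defensive.
Import Order.TTheory GRing.Theory Num.Theory.
Import numFieldNormedType.Exports.
Local Open Scope classical_set_scope.
Local Open Scope ring_scope.

Definition Gamma_fun {R : realType} (k : R) : R :=
  fine (\int[@lebesgue_measure R]_(x in `]0%R, +oo[) (x `^ (k - 1) * expR (- x))%:E)%E.

Definition gamma_pdf {R : realType} (k theta x : R) : R :=
  x `^ (k - 1) * expR (- x / theta) / (Gamma_fun k * theta `^ k).

Definition laplace_pdf {R : realType} (b y : R) : R :=
  (2 * b)^-1 * expR (- `|y| / b).

(* R^2DP Laplace mechanism: X ~ Gamma(k, theta) is drawn (independently of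
   the data), the scale is b = 1/X, and Lap(b) noise is added to q d.
   This is the probability P(M_q(d, b) \in S), i.e. the mixture
   E_X [ P(q d + Lap(1/X) \in S) ]. *)
Definition r2dp_laplace_prob {R : realType} {D : Type} (q : D -> R)
    (k theta : R) (d : D) (S : set R) : \bar R :=
  (\int[@lebesgue_measure R]_(x in `]0%R, +oo[)
     ((gamma_pdf k theta x)%:E *
      \int[@lebesgue_measure R]_(y in S) (laplace_pdf x^-1 (y - q d))%:E))%E.

Definition differentially_private {R : realType} {D : Type}
    (adj : D -> D -> Prop) (P : D -> set R -> \bar R) (eps : R) : Prop :=
  forall d d', adj d d' -> forall S : set R, measurable S ->
    (P d S <= (expR eps)%:E * P d' S)%E.

Definition is_sensitivity {R : realType} {D : Type}
    (adj : D -> D -> Prop) (q : D -> R) (Delta : R) : Prop :=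
  (forall d d', adj d d' -> `|q d - q d'| <= Delta) /\
  (forall e, (forall d d', adj d d' -> `|q d - q d'| <= e) -> Delta <= e).

From mathcomp Require Import all_boot all_order all_algebra.
From mathcomp Require Import all_classical all_reals all_analysis.
From mathcomp Require Import measurable_realfun.
From mathcomp Require Import ring lra.
Import Order.TTheory GRing.Theory Num.Theory.
Local Open Scope ring_scope.
Local Open Scope classical_set_scope.

(** By Tonelli, the probability that the mechanism outputs a point of [S] is
  the integral over [S] of the output density
  [p_a(y) = \int_0^oo gamma_pdf(x) (x / 2) exp(- x |y - a|) dx] with [a = q d].
  Up to a constant factor, [p_a(y)] is [I(c) = \int_0^oo x^k exp(- c x) dx] with
  [c = 1/theta + |y - a|], and the substitution [x |-> (c'/c) x] shows that [I] is
  homogeneous of degree [-(k + 1)].  Hence [p_a(y) / p_a'(y) = (c'/c)^(k+1)] with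
  [c' = 1/theta + |y - a'| <= c + Delta <= c (1 + Delta theta)],
  because [c >= 1/theta]. *)

Section fubini_tonelli_setX.
Local Open Scope ereal_scope.
Context {d1 d2 : measure_display} {T1 : measurableType d1} {T2 : measurableType d2}
  {R : realType}.
Variables (m1 : {sigma_finite_measure set T1 -> \bar R})
          (m2 : {sigma_finite_measure set T2 -> \bar R}).
Variables (A : set T1) (B : set T2) (f : T1 * T2 -> \bar R).
Hypotheses (mA : measurable A) (mB : measurable B).
Hypothesis mf : measurable_fun [set: T1 * T2] f.
Hypothesis f0 : forall x y, A x -> B y -> 0 <= f (x, y).

Let g := f \_ (A `*` B).

Let mg : measurable_fun [set: T1 * T2] g.
Proof.
apply/(measurable_restrictT f (measurableX mA mB)).
exact: measurable_funS mf.
Qed.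

Let g0 z : 0 <= g z.
Proof.
by rewrite /g patchE; case: ifPn => // /set_mem[]; case: z => x y /=; exact: f0.
Qed.

Let integral2_patch x :
  \int[m2]_y g (x, y) = ((fun x => \int[m2]_(y in B) f (x, y)) \_ A) x.
Proof.
rewrite [RHS]patchE; case: ifPn => xA; last first.
  under eq_integral do rewrite /g patchE in_setX /= (negbTE xA).
  exact: integral0.
rewrite [RHS]integral_mkcond; apply: eq_integral => y _.
by rewrite /g !patchE in_setX /= xA.
Qed.

Let integral1_patch y :
  \int[m1]_x g (x, y) = ((fun y => \int[m1]_(x in A) f (x, y)) \_ B) y.
Proof.
rewrite [RHS]patchE; case: ifPn => yB; last first.
  under eq_integral do rewrite /g patchE in_setX /= (negbTE yB) andbF.
  exact: integral0.
rewrite [RHS]integral_mkcond; apply: eq_integral => x _.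
by rewrite /g !patchE in_setX /= yB andbT.
Qed.

Lemma fubini_tonelli_setX :
  \int[m1]_(x in A) \int[m2]_(y in B) f (x, y) =
  \int[m2]_(y in B) \int[m1]_(x in A) f (x, y).
Proof.
rewrite integral_mkcond [RHS]integral_mkcond.
under eq_integral do rewrite -integral2_patch.
under [RHS]eq_integral do rewrite -integral1_patch.
exact: fubini_tonelli.
Qed.

Lemma measurable_fun_integral_setX :
  measurable_fun B (fun y => \int[m1]_(x in A) f (x, y)).
Proof.
apply/(measurable_restrictT _ mB).
rewrite (_ : _ \_ B = fubini_G m1 g); first exact: measurable_fun_fubini_tonelli_G.
by apply/funext => y; rewrite /fubini_G integral1_patch.
Qed.

End fubini_tonelli_setX.

Section lebesgue_measure_dilation.
Context {R : realType}.
Local Notation mu := (@lebesgue_measure R).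
Variable t : R.
Hypothesis t_gt0 : (0 < t)%R.

Let dilation (s : R) : measurableTypeR R := (t * s)%R.

(* This fact equips [pushforward mu dilation] with its measure structure below. *)
Let measurable_dilation : measurable_fun [set: R] dilation.
Proof. exact: mulrl_measurable. Qed.

Lemma mulr_preimage_itvoc (a b : R) :
  dilation @^-1` `]a, b] = `]a / t, b / t]%classic.
Proof.
apply/seteqP; split => s /=; rewrite !in_itv /=;
  by rewrite ltr_pdivrMr // ler_pdivlMr // ![s * t]mulrC.
Qed.

Lemma mulr_preimage_itv0y :
  dilation @^-1` `]0%R, +oo[ = `]0%R, +oo[%classic.
Proof.
by apply/seteqP; split => s /=; rewrite !in_itv /= !andbT pmulr_rgt0.
Qed.

Lemma lebesgue_measure_dilation (A : set R) : measurable A ->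
  mu A = (t%:E * mu (dilation @^-1` A))%E.
Proof.
move=> mA; apply: (@lebesgue_measure_unique _
  (mscale (NngNum (ltW t_gt0)) (pushforward mu dilation))) => //.
move=> _ [[a b] _ <-].
transitivity (t%:E * mu (dilation @^-1` `]a, b]))%E; last by [].
rewrite mulr_preimage_itvoc.
rewrite !lebesgue_measure_itv /= !lte_fin ltr_pM2r ?invr_gt0 //.
case: ifP => _; last by rewrite mule0.
by rewrite -EFinD -EFinM; congr EFin; field; rewrite gt_eqF.
Qed.

Lemma ge0_integral_dilation (D : set R) (f : R -> \bar R) : measurable D ->
  measurable_fun D f -> (forall x, D x -> 0 <= f x)%E ->
  (\int[mu]_(x in D) f x =
   t%:E * \int[mu]_(s in dilation @^-1` D) f (t * s)%R)%E.
Proof.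
move=> mD mf f0.
rewrite (eq_measure_integral
  (mscale (NngNum (ltW t_gt0)) (pushforward mu dilation))); last first.
  by move=> A mA _; exact: lebesgue_measure_dilation.
rewrite ge0_integral_mscale //= ge0_integral_pushforward //.
by move=> x /set_mem; exact: f0.
Qed.

End lebesgue_measure_dilation.

Section gamma_kernel.
Context {R : realType}.
Local Notation mu := (@lebesgue_measure R).

Definition gamma_kernel (k c x : R) : R := x `^ k * expR (- (c * x)).

Lemma gamma_kernel_ge0 k c x : 0 <= gamma_kernel k c x.
Proof. by rewrite mulr_ge0 ?powR_ge0 ?expR_ge0. Qed.

Lemma measurable_gamma_kernel k c : measurable_fun [set: R] (gamma_kernel k c).
Proof.
apply: measurable_funM; first exact: measurable_powR.
apply: measurableT_comp; first exact: measurable_expR.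
by apply: measurableT_comp; [exact: oppr_measurable | exact: mulrl_measurable].
Qed.

Lemma integral_gamma_kernel_scale (k c c' : R) : 0 < c -> 0 < c' ->
  (\int[mu]_(x in `]0%R, +oo[) (gamma_kernel k c x)%:E =
   ((c' / c) `^ (k + 1))%:E * \int[mu]_(x in `]0%R, +oo[) (gamma_kernel k c' x)%:E)%E.
Proof.
move=> c_gt0 c'_gt0; set t := c' / c; have t_gt0 : 0 < t by rewrite divr_gt0.
have dilationE s : 0 <= s -> gamma_kernel k c (t * s) = t `^ k * gamma_kernel k c' s.
  move=> s_ge0; rewrite /gamma_kernel powRM ?(ltW t_gt0) // -mulrA.
  by congr (_ * (_ * expR (- _))); rewrite /t; field; rewrite gt_eqF.
rewrite (ge0_integral_dilation _ t_gt0) ?mulr_preimage_itv0y //; first last.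
- by move=> x _; rewrite lee_fin gamma_kernel_ge0.
- by apply/measurable_EFinP; exact: measurable_funS (measurable_gamma_kernel k c).
under eq_integral => s /[!inE] /= /[!in_itv] /= /andP[s_gt0 _] do
  rewrite dilationE ?ltW // EFinM.
rewrite ge0_integralZl_EFin ?powR_ge0 //; first last.
- by apply/measurable_EFinP; exact: measurable_funS (measurable_gamma_kernel k c').
- by move=> x _; rewrite lee_fin gamma_kernel_ge0.
have powRS : t * t `^ k = t `^ (k + 1).
  by rewrite powRD ?(gt_eqF t_gt0) ?implybT // powRr1 ?(ltW t_gt0) // mulrC.
by rewrite muleA -EFinM powRS.
Qed.

End gamma_kernel.

Lemma ler_shifted_norm_ratio {R : realFieldType} {c Delta u v : R} :
  0 < c -> `|u - v| <= Delta -> (c + `|v|) / (c + `|u|) <= 1 + Delta / c.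
Proof.
move=> c_gt0 shift_le.
have cu_gt0 : 0 < c + `|u| by rewrite ltr_wpDr.
have v_le : `|v| <= `|u| + Delta.
  by have := lerB_dist v u; rewrite distrC; lra.
have Delta_ge0 : 0 <= Delta := le_trans (normr_ge0 _) shift_le.
have u_Delta_ge0 : 0 <= `|u| * (Delta / c) by rewrite mulr_ge0 // divr_ge0 // ltW.
rewrite ler_pdivrMr //.
rewrite (_ : (1 + Delta / c) * _ = c + `|u| + Delta + `|u| * (Delta / c)).
  by lra.
by field; rewrite gt_eqF.
Qed.

Section r2dp_laplace.
Context {R : realType}.
Local Notation mu := (@lebesgue_measure R).

Lemma Gamma_fun_ge0 (k : R) : 0 <= Gamma_fun k.
Proof.
apply/fine_ge0/integral_ge0 => x _.
by rewrite lee_fin mulr_ge0 ?powR_ge0 ?expR_ge0.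
Qed.

Lemma gamma_pdf_ge0 (k theta x : R) : 0 <= theta -> 0 <= gamma_pdf k theta x.
Proof.
by move=> theta_ge0; rewrite divr_ge0 ?mulr_ge0 ?powR_ge0 ?expR_ge0 ?Gamma_fun_ge0.
Qed.

Lemma laplace_pdf_ge0 (b y : R) : 0 <= b -> 0 <= laplace_pdf b y.
Proof. by move=> b_ge0; rewrite mulr_ge0 ?expR_ge0 // invr_ge0 mulr_ge0. Qed.

Lemma measurable_laplace_pdf (b a : R) :
  measurable_fun [set: R] (fun y => laplace_pdf b (y - a)).
Proof.
apply: measurable_funM; first exact: measurable_cst.
apply: measurableT_comp; first exact: measurable_expR.
apply: measurable_funM; last exact: measurable_cst.
apply: measurableT_comp; first exact: oppr_measurable.
apply: measurableT_comp; first exact: normr_measurable.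
by apply: measurable_funB; [exact: measurable_id | exact: measurable_cst].
Qed.

Variables (k theta : R).
Hypotheses (k_gt0 : 0 < k) (theta_gt0 : 0 < theta).

Definition r2dp_laplace_density (a y : R) : \bar R :=
  (\int[mu]_(x in `]0%R, +oo[) (gamma_pdf k theta x * laplace_pdf x^-1 (y - a))%:E)%E.

Let C := (Gamma_fun k * theta `^ k)^-1 / 2.

Let C_ge0 : 0 <= C.
Proof. by rewrite divr_ge0 // invr_ge0 mulr_ge0 ?Gamma_fun_ge0 ?powR_ge0. Qed.

Lemma gamma_laplace_pdfE x y : 0 < x ->
  gamma_pdf k theta x * laplace_pdf x^-1 y = C * gamma_kernel k (theta^-1 + `|y|) x.
Proof.
move=> x_gt0; rewrite /gamma_pdf /laplace_pdf /gamma_kernel /C.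
have -> : x `^ k = x `^ (k - 1) * x.
  rewrite -[in LHS](subrK 1 k) [in LHS]powRD ?(gt_eqF x_gt0) ?implybT //.
  by rewrite powRr1 ?(ltW x_gt0).
have -> : - ((theta^-1 + `|y|) * x) = - x / theta + - `|y| / x^-1 by rewrite invrK; ring.
by rewrite expRD invfM invrK invf_div; ring.
Qed.

Let F (a : R) (p : R * R) : \bar R :=
  (C * gamma_kernel k (theta^-1 + `|p.2 - a|) p.1)%:E.

Let F_ge0 a p : (0 <= F a p)%E.
Proof. by rewrite lee_fin mulr_ge0 ?gamma_kernel_ge0. Qed.

Let measurable_F a : measurable_fun [set: R * R] (F a).
Proof.
apply/measurable_EFinP/measurable_funM; first exact: measurable_cst.
apply: measurable_funM; first exact: measurableT_comp (measurable_powR _) measurable_fst.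
apply: measurableT_comp; first exact: measurable_expR.
apply: measurableT_comp; first exact: oppr_measurable.
apply: measurable_funM; last exact: measurable_fst.
apply: measurable_funD; first exact: measurable_cst.
apply: measurableT_comp; first exact: normr_measurable.
by apply: measurable_funB; [exact: measurable_snd | exact: measurable_cst].
Qed.

Let r2dp_laplace_density_F a y :
  r2dp_laplace_density a y = (\int[mu]_(x in `]0%R, +oo[) F a (x, y))%E.
Proof.
apply: eq_integral => x; rewrite inE /= in_itv /= andbT => x_gt0.
by rewrite gamma_laplace_pdfE.
Qed.

Lemma r2dp_laplace_densityE a y :
  r2dp_laplace_density a y =
  (C%:E * \int[mu]_(x in `]0%R, +oo[) (gamma_kernel k (theta^-1 + `|y - a|) x)%:E)%E.
Proof.
rewrite r2dp_laplace_density_F /F.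
under eq_integral do rewrite EFinM.
rewrite ge0_integralZl_EFin //.
- by move=> x _; rewrite lee_fin gamma_kernel_ge0.
- apply/measurable_EFinP.
  exact: measurable_funS (measurable_gamma_kernel k (theta^-1 + `|y - a|)).
Qed.

Lemma r2dp_laplace_density_ge0 a y : (0 <= r2dp_laplace_density a y)%E.
Proof. by rewrite r2dp_laplace_density_F; apply: integral_ge0 => x _. Qed.

Lemma measurable_r2dp_laplace_density a (S : set R) : measurable S ->
  measurable_fun S (r2dp_laplace_density a).
Proof.
move=> mS; apply: eq_measurable_fun (measurable_fun_integral_setX mu _ _ _
  (measurable_itv _) mS (measurable_F a) (fun x y _ _ => F_ge0 a (x, y))).
by move=> y _; rewrite r2dp_laplace_density_F.
Qed.

Lemma r2dp_laplace_probE (D : Type) (q : D -> R) d (S : set R) : measurable S ->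
  r2dp_laplace_prob q k theta d S = (\int[mu]_(y in S) r2dp_laplace_density (q d) y)%E.
Proof.
move=> mS; rewrite /r2dp_laplace_prob.
transitivity (\int[mu]_(x in `]0%R, +oo[) \int[mu]_(y in S) F (q d) (x, y))%E.
  apply: eq_integral => x; rewrite inE /= in_itv /= andbT => x_gt0.
  rewrite -ge0_integralZl_EFin //.
  - by apply: eq_integral => y _; rewrite -EFinM gamma_laplace_pdfE.
  - by move=> y _; rewrite lee_fin laplace_pdf_ge0 // invr_ge0 ltW.
  - by apply/measurable_EFinP; exact: measurable_funS (measurable_laplace_pdf x^-1 (q d)).
  - exact/gamma_pdf_ge0/ltW.
rewrite (fubini_tonelli_setX mu mu _ _ _ (measurable_itv _) mS (measurable_F (q d))
  (fun x y _ _ => F_ge0 _ (x, y))).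
by apply: eq_integral => y _; rewrite r2dp_laplace_density_F.
Qed.

Lemma r2dp_laplace_density_le (a a' y Delta : R) : `|a - a'| <= Delta ->
  (r2dp_laplace_density a y <=
   (expR ((k + 1) * ln (1 + Delta * theta)))%:E * r2dp_laplace_density a' y)%E.
Proof.
move=> aa'_le.
have Delta_ge0 : 0 <= Delta := le_trans (normr_ge0 _) aa'_le.
have theta_inv_gt0 : 0 < theta^-1 by rewrite invr_gt0.
have c_gt0 b : 0 < theta^-1 + `|y - b| by rewrite ltr_wpDr.
rewrite !r2dp_laplace_densityE (integral_gamma_kernel_scale k _ _ (c_gt0 a) (c_gt0 a')).
rewrite muleA -EFinM [X in (_ <= X)%E]muleA -EFinM lee_wpmul2r ?integral_ge0 //.
  by move=> x _; rewrite lee_fin gamma_kernel_ge0.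
rewrite lee_fin [X in _ <= X]mulrC ler_wpM2l //.
have ratio_gt0 : 0 < 1 + Delta * theta.
  by have := mulr_ge0 Delta_ge0 (ltW theta_gt0); lra.
rewrite [X in _ <= X](_ : _ = (1 + Delta * theta) `^ (k + 1)); last first.
  by rewrite /powR gt_eqF.
apply: ge0_ler_powR.
- by rewrite addr_ge0 // ltW.
- by rewrite nnegrE divr_ge0 // ltW.
- by rewrite nnegrE ltW.
have shift_le : `|(y - a) - (y - a')| <= Delta.
  by rewrite (_ : _ - _ = - (a - a')) ?normrN //; ring.
by have := ler_shifted_norm_ratio theta_inv_gt0 shift_le; rewrite invrK.
Qed.

End r2dp_laplace.

Theorem theoremB3 (R : realType) (D : Type) (adj : D -> D -> Prop)
    (q : D -> R) (Delta k theta : R) :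
  is_sensitivity adj q Delta -> 0 < k -> 0 < theta ->
  differentially_private adj (r2dp_laplace_prob q k theta)
    ((k + 1) * ln (1 + Delta * theta)).
Proof.
move=> [q_sens _] k_gt0 theta_gt0 d d' adj_dd' S mS.
have density_ge0 a y : (0 <= r2dp_laplace_density k theta a y)%E.
  exact: r2dp_laplace_density_ge0.
have mdensity a : measurable_fun S (r2dp_laplace_density k theta a).
  exact: measurable_r2dp_laplace_density.
rewrite !r2dp_laplace_probE // -ge0_integralZl_EFin ?expR_ge0 //; last exact: mdensity.
apply: ge0_le_integral => //.
- exact: mdensity.
- exact: measurable_funeM _ (mdensity _).
- by move=> y _; exact: r2dp_laplace_density_le (q_sens d d' adj_dd').
Qed.
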